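(* Run the algorithm POLAR described in the context with ridge parameter $\lambda\ge 1$, and suppose $\|x_t\|_2\le1$ for all $t$. On the event $$\mathcal{E}:=\bigl\{\,|x_t^\top(\hat\theta_{a,t}-\theta_a^\star)|\le\beta_t\,s_{a,t}\ \text{for all } a\in\mathcal{M},\ t\le T\,\bigr\},$$ we have $$\sum_{t=1}^T\Bigl[\max_{a\in\mathcal{M}}\mu_t(a;C_{\ell(t)})-\mu_t(a_t;C_{\ell(t)})\Bigr]\le 2\beta_T\sqrt{2NdT\log\Bigl(1+\frac{T}{d\lambda}\Bigr)}.$$
   Context: Library $\mathcal{M}=\{1,\dots,N\}$, cache size $K$, contexts $x_t\in\mathbb{R}^d$, unknown $\theta_a^\star\in\mathbb{R}^d$, known penalties $\lambda_a>0$, weight $\alpha>0$, switching cost $\gamma>0$. Playing $a_t$ reveals $q_t(a_t)=\langle\theta_{a_t}^\star,x_t\rangle+\eta_t(a_t)$. A cache $C_\ell$ ($|C_\ell|\le K$) is fixed in epoch $\ell$; $\ell(t)$ is the epoch of round $t$; $\mu_t(a;C):=\langle\theta_a^\star,x_t\rangle-\alpha\lambda_a\mathbf{1}\{a\notin C\}$. Define $V_{a,t}:=\lambda I_d+\sum_{s<t}\mathbf{1}\{a_s=a\}x_sx_s^\top$, $\hat\theta_{a,t}:=V_{a,t}^{-1}\sum_{s<t}\mathbf{1}\{a_s=a\}q_s(a)x_s$, $s_{a,t}:=\sqrt{x_t^\top V_{a,t}^{-1}x_t}$, $\beta_t:=\sigma\sqrt{d\log(1+\tfrac{t}{d\lambda})+2\log\tfrac{N}{\delta}}+\sqrt\lambda$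 (a nondecreasing sequence), and $\mathrm{score}_t(a):=\langle\hat\theta_{a,t},x_t\rangle+\beta_ts_{a,t}-\alpha\lambda_a\mathbf{1}\{a\notin C_{\ell(t)}\}$. Algorithm POLAR: epochs of $H$ rounds; $C_1$ arbitrary with $|C_1|\le K$; at each epoch boundary $\ell>1$ the cache is replaced by the output of a greedy marginal-gain procedure (adding at most $K$ adapters, based on UCB values $\langle\hat\theta_a,x_t\rangle+\beta_t\sqrt{x_t^\top V_a^{-1}x_t}$ on the previous epoch's contexts, penalties $\alpha\lambda_a$ and switching cost $\gamma$); in every round it plays $a_t\in\arg\max_a\mathrm{score}_t(a)$, observes $q_t(a_t)$ and updates $V_{a_t},\hat\theta_{a_t}$. *)

From HB Require Import structures.
From mathcomp Require Import all_boot all_order all_algebra.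
From mathcomp Require Import reals exp.
Set Implicit Arguments. Unset Strict Implicit. Unset Printing Implicit Defensive.
Import Order.TTheory GRing.Theory Num.Theory.
Local Open Scope ring_scope.

Section POLAR.
Variables (R : realType) (d N : nat).

Definition inner (u v : 'cV[R]_d) : R := (u^T *m v) ord0 ord0.

(* epoch of round t (rounds t = 1,2,...), epochs of H rounds, numbered 1,2,... *)
Definition epoch (H t : nat) : nat := (t.-1 %/ H).+1.

Definition qobs (theta : 'I_N -> 'cV[R]_d) (x : nat -> 'cV[R]_d)
  (eta : nat -> 'I_N -> R) (act : nat -> 'I_N) (s : nat) : R :=
  inner (theta (act s)) (x s) + eta s (act s).

Definition Vmat (lam : R) (x : nat -> 'cV[R]_d) (act : nat -> 'I_N)
  (a : 'I_N) (t : nat) : 'M[R]_d :=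
  lam%:M + \sum_(1 <= s < t | act s == a) (x s *m (x s)^T).

Definition thetahat (lam : R) (theta : 'I_N -> 'cV[R]_d) (x : nat -> 'cV[R]_d)
  (eta : nat -> 'I_N -> R) (act : nat -> 'I_N) (a : 'I_N) (t : nat) : 'cV[R]_d :=
  invmx (Vmat lam x act a t) *m
    \sum_(1 <= s < t | act s == a) (qobs theta x eta act s *: x s).

Definition swidth (lam : R) (x : nat -> 'cV[R]_d) (act : nat -> 'I_N)
  (a : 'I_N) (t : nat) : R :=
  Num.sqrt (((x t)^T *m invmx (Vmat lam x act a t) *m x t) ord0 ord0).

Definition beta (sigma delta lam : R) (t : nat) : R :=
  sigma * Num.sqrt (d%:R * ln (1 + t%:R / (d%:R * lam)) + 2 * ln (N%:R / delta))
  + Num.sqrt lam.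

Definition mu (theta : 'I_N -> 'cV[R]_d) (x : nat -> 'cV[R]_d)
  (alpha : R) (pen : 'I_N -> R) (t : nat) (C : {set 'I_N}) (a : 'I_N) : R :=
  inner (theta a) (x t) - alpha * pen a * (a \notin C)%:R.

Definition score (sigma delta lam : R) (theta : 'I_N -> 'cV[R]_d)
  (x : nat -> 'cV[R]_d) (eta : nat -> 'I_N -> R) (act : nat -> 'I_N)
  (alpha : R) (pen : 'I_N -> R) (C : {set 'I_N}) (t : nat) (a : 'I_N) : R :=
  inner (thetahat lam theta x eta act a t) (x t)
  + beta sigma delta lam t * swidth lam x act a t
  - alpha * pen a * (a \notin C)%:R.

(* max_{a in M} mu_t(a; C); the fold is seeded with mu_t(a0; C) for some
   a0 in M, so it is exactly the maximum over 'I_N. *)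
Definition maxmu (theta : 'I_N -> 'cV[R]_d) (x : nat -> 'cV[R]_d)
  (alpha : R) (pen : 'I_N -> R) (t : nat) (C : {set 'I_N}) (a0 : 'I_N) : R :=
  \big[Num.max/mu theta x alpha pen t C a0]_(b : 'I_N) mu theta x alpha pen t C b.

End POLAR.

(* On the event E, optimism gives mu_t(b) <= score_t(b) for every adapter b,
   while score_t(a_t) <= mu_t(a_t) + 2 beta_t s_{a_t,t}; since a_t maximises the
   score and the cache penalty enters mu and score alike, the instantaneous
   regret is at most 2 beta_T s_{a_t,t}.  By Cauchy-Schwarz it remains to bound
   sum_t s_{a_t,t}^2 by 2 N d log(1 + T/(d lam)), adapter by adapter (elliptical
   potential): lam >= 1 and |x_t| <= 1 give s^2 <= 1, hence s^2 <= 2 log(1 + s^2);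
   the matrix determinant lemma turns prod (1 + s^2) into det V_{a,T+1} / lam^d,
   and Hadamard's inequality with AM-GM bounds this determinant by the d-th
   power of its normalised trace, at most lam (1 + T/(d lam)). *)

From HB Require Import structures.
From mathcomp Require Import all_boot all_order all_algebra.
From mathcomp Require Import reals exp ring lra.
Import Order.TTheory GRing.Theory Num.Theory.
Local Open Scope ring_scope.

Section Matrices.
Set Implicit Arguments.
Unset Strict Implicit.

Lemma det1D_rank1 (R : comPzRingType) n (w u : 'cV[R]_n) :
  \det (1%:M + w *m u^T) = 1 + (u^T *m w) 0 0.
Proof.
set L : 'M[R]_(n + 1) := block_mx 1%:M 0 u^T 1%:M.
set M : 'M[R]_(n + 1) := block_mx (1%:M + w *m u^T) w 0 1%:M.
set L' : 'M[R]_(n + 1) := block_mx 1%:M 0 (- u^T) 1%:M.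
have LML' : L *m M *m L' = block_mx 1%:M w 0 (1%:M + u^T *m w).
  rewrite /L /M /L' !mulmx_block !mul1mx !mulmx1 !mul0mx !mulmx0 !addr0 !add0r.
  congr block_mx.
  - by rewrite mulmxN addrK.
  - rewrite mulmxDr mulmx1 mulmxDl mul1mx !mulmxN mulmxA.
    by rewrite [X in _ + X]addrC addrACA !subrr addr0.
  - by rewrite addrC.
have := congr1 determinant LML'.
rewrite !det_mulmx /L /M /L' det_lblock det_ublock det_lblock det_ublock !det1.
by rewrite !mul1r !mulr1 det_mx11 => ->; rewrite !mxE eqxx mulr1n.
Qed.

Lemma detD_rank1 (R : comUnitRingType) n (V : 'M[R]_n) (u : 'cV[R]_n) :
  V \in unitmx -> \det (V + u *m u^T) = \det V * (1 + (u^T *m invmx V *m u) 0 0).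
Proof.
move=> V_unit; have -> : V + u *m u^T = V *m (1%:M + (invmx V *m u) *m u^T).
  by rewrite mulmxDr mulmx1 mulmxA mulKVmx.
by rewrite det_mulmx det1D_rank1 mulmxA.
Qed.

Definition schur_complement (R : fieldType) n (a : R) (c : 'rV[R]_n)
  (r : 'cV[R]_n) (D : 'M[R]_n) := D - a^-1 *: (r *m c).

Lemma det_block_schur (R : fieldType) n (a : R) (c : 'rV[R]_n) (r : 'cV[R]_n)
    (D : 'M[R]_n) : a != 0 ->
  \det (block_mx a%:M c r D : 'M_(1 + n)) = a * \det (schur_complement a c r D).
Proof.
move=> a_neq0.
have E : block_mx 1%:M 0 (- a^-1 *: r) 1%:M *m block_mx a%:M c r D
         = block_mx a%:M c 0 (schur_complement a c r D) :> 'M_(1 + n).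
  rewrite mulmx_block !mul1mx !mul0mx !addr0 mul_mx_scalar scalerA.
  by rewrite mulrN mulfV // scaleN1r addNr -scalemxAl scaleNr addrC.
have := congr1 determinant E.
by rewrite det_mulmx det_lblock !det1 !mul1r det_ublock det_scalar expr1.
Qed.

Section Coercive.
Variable R : realFieldType.

Definition coercive n (A : 'M[R]_n) (c : R) :=
  forall v : 'cV[R]_n, c * (v^T *m v) 0 0 <= (v^T *m A *m v) 0 0.

Lemma sqnorm_ge0 n (v : 'cV[R]_n) : 0 <= (v^T *m v) 0 0.
Proof. by rewrite mxE sumr_ge0 // => i _; rewrite !mxE -expr2 sqr_ge0. Qed.

Lemma coercive_diag n (A : 'M[R]_n) c : coercive A c -> forall i, c <= A i i.
Proof.
move=> Ac i; move: (Ac (delta_mx i 0)).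
by rewrite trmx_delta mul_delta_mx -mulmxA -colE -rowE !mxE eqxx mulr1.
Qed.

Section Schur.
Variables (n : nat) (a : R) (c : 'rV[R]_n) (r : 'cV[R]_n) (D : 'M[R]_n).
Hypothesis a_neq0 : a != 0.

Local Notation S := (schur_complement a c r D).

Lemma coercive_schur k : 0 <= k ->
  coercive (block_mx a%:M c r D : 'M_(1 + n)) k -> coercive S k.
Proof.
move=> k_ge0 Ak v.
(* Test the block form on (u, v) with u chosen to cancel the first block row. *)
pose u : 'cV[R]_1 := - a^-1 *: (c *m v).
have := Ak (col_mx u v).
rewrite -mulmxA mul_block_col tr_col_mx !mul_row_col.
have -> : a%:M *m u + c *m v = 0.
  by rewrite mul_scalar_mx /u scalerA mulrN mulfV // scaleN1r addNr.
have -> : r *m u + D *m v = S *m v.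
  by rewrite /u -scalemxAr mulmxA scalemxAl mulmxBl scaleNr mulNmx addrC.
rewrite mulmx0 add0r mulmxA; apply: le_trans.
by rewrite [X in _ <= k * X]mxE ler_wpM2l // lerDr sqnorm_ge0.
Qed.

Lemma schur_sym : D^T = D -> r^T = c -> S^T = S.
Proof. by move=> DT rTc; rewrite linearB linearZ /= trmx_mul DT -rTc trmxK. Qed.

Lemma schur_diag_le : 0 < a -> r^T = c -> forall i, S i i <= D i i.
Proof.
move=> a_gt0 rTc i; rewrite !mxE big_ord1 -rTc mxE gerBl -expr2.
by rewrite mulr_ge0 ?invr_ge0 ?sqr_ge0 ?ltW.
Qed.

End Schur.

Lemma hadamard_succ n c (A : 'M[R]_(1 + n)) : 0 < c ->
  (forall B : 'M[R]_n, B^T = B -> coercive B c ->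
     0 < \det B /\ \det B <= \prod_i B i i) ->
  A^T = A -> coercive A c -> 0 < \det A /\ \det A <= \prod_i A i i.
Proof.
move=> c_gt0 IH; rewrite -[A]submxK.
move: (ulsubmx _) (ursubmx _) (dlsubmx _) (drsubmx _) => a cc r D.
rewrite [a]mx11_scalar; move: (a 0 0) => {}a Asym Ac.
have a_gt0 : 0 < a.
  have := coercive_diag Ac (lshift n 0).
  by rewrite block_mxEul mxE eqxx mulr1n; apply: lt_le_trans.
rewrite tr_block_mx tr_scalar_mx in Asym.
have DT : D^T = D by have := congr1 drsubmx Asym; rewrite !block_mxKdr.
have rT : r^T = cc by have := congr1 ursubmx Asym; rewrite !block_mxKur.
have Sc := coercive_schur (lt0r_neq0 a_gt0) (ltW c_gt0) Ac.
have [Sdet_gt0 Sdet_le] := IH _ (schur_sym a DT rT) Sc.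
have liftE (i : 'I_n) : lift ord0 i = rshift 1 i :> 'I_n.+1 by apply: val_inj.
rewrite det_block_schur ?gt_eqF // big_ord_recl; split; first exact: mulr_gt0.
under eq_bigr do rewrite liftE block_mxEdr.
have -> : ord0 = lshift n (0 : 'I_1) :> 'I_(1 + n) by apply: val_inj.
rewrite block_mxEul mxE eqxx mulr1n ler_pM2l //.
apply: le_trans Sdet_le _; apply: ler_prod => i _.
by rewrite schur_diag_le // andbT (le_trans (ltW c_gt0) (coercive_diag Sc i)).
Qed.

Lemma hadamard n (A : 'M[R]_n) c : 0 < c -> A^T = A -> coercive A c ->
  0 < \det A /\ \det A <= \prod_i A i i.
Proof.
move=> c_gt0; elim: n A => [|n IH] A; first by rewrite det_mx00 big_ord0 ltr01 lexx.
exact: hadamard_succ.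
Qed.

Lemma coercive_unitmx n (A : 'M[R]_n) c : 0 < c -> A^T = A -> coercive A c ->
  A \in unitmx.
Proof.
by move=> c_gt0 AT Ac; rewrite unitmxE unitfE gt_eqF //; case: (hadamard c_gt0 AT Ac).
Qed.

Lemma det_le_trace n (A : 'M[R]_n) c : 0 < c -> A^T = A -> coercive A c ->
  \det A <= (\tr A / n%:R) ^+ n.
Proof.
move=> c_gt0 AT Ac; have [_ det_le] := hadamard c_gt0 AT Ac.
apply: le_trans det_le _.
have [|AGM _] := @leif_AGM R 'I_n predT (fun i => A i i).
  by move=> i _; exact: le_trans (ltW c_gt0) (coercive_diag Ac i).
by rewrite cardT size_enum_ord in AGM.
Qed.

Lemma trmx11 (A : 'M[R]_1) : A^T = A.
Proof. by rewrite [A]mx11_scalar tr_scalar_mx. Qed.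

Lemma qform_invmx_ge0_le1 n (V : 'M[R]_n) c (x : 'cV[R]_n) :
  V \in unitmx -> 1 <= c -> coercive V c -> (x^T *m x) 0 0 <= 1 ->
  0 <= (x^T *m invmx V *m x) 0 0 <= 1.
Proof.
move=> V_unit c_ge1 Vc; rewrite -mulmxA.
have [y ->] : exists y, x = V *m y by exists (invmx V *m x); rewrite mulKVmx.
rewrite mulKmx // => Vy_le1.
have xy : (V *m y)^T *m y = y^T *m V *m y.
  by rewrite -[RHS]trmx11 !trmx_mul trmxK mulmxA.
have yx : y^T *m (V *m y) = y^T *m V *m y by rewrite mulmxA.
have := sqnorm_ge0 (V *m y - y); have := sqnorm_ge0 y; have := Vc y.
rewrite [(_ - _)^T]linearB mulmxBl !mulmxBr /= xy yx.
do 2!rewrite ![((_ + _ : 'M_1) 0 0)]mxE ![((- _ : 'M_1) 0 0)]mxE.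
move: ((y^T *m V *m y) 0 0) ((y^T *m y) 0 0) Vy_le1.
move: (((V *m y)^T *m (V *m y)) 0 0) => X Q Y X_le1 *; apply/andP; split; nra.
Qed.

End Coercive.

End Matrices.

Lemma sqr_sum_le (R : realFieldType) (f : nat -> R) m n :
  (\sum_(m <= i < n) f i) ^+ 2 <= (n - m)%:R * \sum_(m <= i < n) f i ^+ 2.
Proof.
set S := \sum_(m <= i < n) f i; set Q := \sum_(m <= i < n) f i ^+ 2.
have : 0 <= \sum_(m <= i < n) \sum_(m <= j < n) (f i - f j) ^+ 2.
  by apply: sumr_ge0 => i _; apply: sumr_ge0 => j _; exact: sqr_ge0.
have sum_sqrB i : \sum_(m <= j < n) (f i - f j) ^+ 2
    = f i ^+ 2 *+ (n - m) - (f i * S) *+ 2 + Q.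
  by under eq_bigr do rewrite sqrrB; rewrite big_split sumrB sumr_const_nat
    /= sumrMnl -mulr_sumr.
under eq_bigr do rewrite sum_sqrB.
rewrite big_split sumrB /= sumr_const_nat !sumrMnl -mulr_suml -/S -/Q -mulr_natl.
rewrite expr2; lra.
Qed.

Lemma ln_prod (R : realType) (I : eqType) (r : seq I) (P : pred I) (F : I -> R) :
  (forall i, P i -> 0 < F i) ->
  ln (\prod_(i <- r | P i) F i) = \sum_(i <- r | P i) ln (F i).
Proof.
move=> F_gt0; elim: r => [|i r IH]; first by rewrite !big_nil ln1.
rewrite !big_cons; case: ifP => // Pi.
by rewrite lnM ?IH // posrE ?F_gt0 // prodr_gt0.
Qed.

Lemma le_2ln1D (R : realType) (q : R) : 0 <= q <= 1 -> q <= 2 * ln (1 + q).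
Proof.
move=> /andP[q_ge0 q_le1]; have q1_gt0 : 0 < 1 + q by lra.
have : -1 < - (q / (1 + q)) by rewrite ltrN2 ltr_pdivrMr //; lra.
move=> /le_ln1Dx; rewrite (_ : 1 - q / (1 + q) = (1 + q)^-1); last by field; lra.
rewrite lnV ?posrE // lerN2 => ln_ge.
apply: le_trans (ler_wpM2l _ ln_ge) => //.
by rewrite mulrA ler_pdivlMr //; nra.
Qed.

Section EllipticalPotential.
Set Implicit Arguments.
Unset Strict Implicit.
Variables (R : realType) (d N : nat) (lam : R).
Variables (x : nat -> 'cV[R]_d) (act : nat -> 'I_N).
Hypotheses (d_gt0 : (0 < d)%N) (lam_ge1 : 1 <= lam).
Hypothesis x_le1 : forall t, inner (x t) (x t) <= 1.

Local Notation V := (Vmat lam x act).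

Definition sq_width a t := ((x t)^T *m invmx (V a t) *m x t) 0 0.

Let lam_gt0 : 0 < lam. Proof. by apply: lt_le_trans lam_ge1. Qed.

Lemma Vmat_sym a t : (V a t)^T = V a t.
Proof.
rewrite /Vmat linearD /= tr_scalar_mx linear_sum /=; congr (_ + _).
by apply: eq_bigr => s _; rewrite trmx_mul trmxK.
Qed.

Lemma Vmat_coercive a t : coercive (V a t) lam.
Proof.
move=> v; rewrite mulmxDr mulmxDl mul_mx_scalar -scalemxAl.
rewrite [X in _ <= X]mxE [X in _ <= X + _]mxE lerDl.
rewrite mulmx_sumr mulmx_suml summxE sumr_ge0 // => s _.
rewrite (_ : _ *m _ = ((x s)^T *m v)^T *m ((x s)^T *m v)) ?sqnorm_ge0 //.
by rewrite trmx_mul trmxK !mulmxA.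
Qed.

Lemma Vmat_unit a t : V a t \in unitmx.
Proof. exact: coercive_unitmx lam_gt0 (Vmat_sym a t) (Vmat_coercive a t). Qed.

Lemma mxtrace_Vmat a t :
  \tr (V a t) = lam *+ d + \sum_(1 <= s < t | act s == a) inner (x s) (x s).
Proof.
rewrite /Vmat mxtraceD mxtrace_scalar linear_sum /=; congr (_ + _).
by apply: eq_bigr => s _; rewrite mxtrace_mulC trace_mx11.
Qed.

Lemma VmatS a t : (0 < t)%N ->
  V a t.+1 = V a t + (if act t == a then x t *m (x t)^T else 0).
Proof. by move=> t_gt0; rewrite /Vmat big_mkcond big_nat_recr //= -big_mkcond addrA. Qed.

Lemma sq_width_ge0_le1 a t : 0 <= sq_width a t <= 1.
Proof.
exact: qform_invmx_ge0_le1 (Vmat_unit a t) lam_ge1 (Vmat_coercive a t) (x_le1 t).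
Qed.

Lemma det_Vmat a T : \det (V a T.+1) =
  lam ^+ d * \prod_(1 <= t < T.+1 | act t == a) (1 + sq_width a t).
Proof.
elim: T => [|T IH]; first by rewrite /Vmat !big_geq // addr0 det_scalar mulr1.
rewrite VmatS // big_mkcond big_nat_recr //= -big_mkcond.
case: eqP => _; last by rewrite addr0 mulr1.
by rewrite detD_rank1 ?Vmat_unit // IH mulrA.
Qed.

Lemma det_Vmat_le a T :
  \det (V a T.+1) <= (lam * (1 + T%:R / (d%:R * lam))) ^+ d.
Proof.
have d_pos : 0 < d%:R :> R by rewrite ltr0n.
apply: le_trans (det_le_trace lam_gt0 (Vmat_sym _ _) (Vmat_coercive _ _)) _.
have sum_ge0 : 0 <= \sum_(1 <= s < T.+1 | act s == a) inner (x s) (x s).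
  by rewrite sumr_ge0 // => s _; exact: sqnorm_ge0.
have sum_le : \sum_(1 <= s < T.+1 | act s == a) inner (x s) (x s) <= T%:R.
  apply: le_trans (_ : \sum_(1 <= s < T.+1) 1 <= _); last first.
    by rewrite sumr_const_nat subn1.
  by rewrite big_mkcond ler_sum // => s _; case: ifP => _; rewrite ?x_le1.
rewrite mxtrace_Vmat; apply: lerXn2r; rewrite ?nnegrE.
- by rewrite divr_ge0 ?ler0n // addr_ge0 // mulrn_wge0 // ltW.
- rewrite mulr_ge0 ?(ltW lam_gt0) // addr_ge0 // divr_ge0 ?ler0n //.
  by rewrite mulr_ge0 ?ler0n // ltW.
rewrite ler_pdivrMr // (_ : _ * d%:R = lam *+ d + T%:R) ?lerD2l //.
by rewrite -mulr_natr; field; rewrite !gt_eqF.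
Qed.

(* The elliptical potential lemma, arm by arm: each [1 + sq_width] is a ratio of
   consecutive determinants. *)
Lemma sum_sq_width_arm_le a T :
  \sum_(1 <= t < T.+1 | act t == a) sq_width a t
    <= 2 * (d%:R * ln (1 + T%:R / (d%:R * lam))).
Proof.
have u_gt0 : 0 < 1 + T%:R / (d%:R * lam).
  by rewrite ltr_wpDr // divr_ge0 // mulr_ge0 // ltW.
have w1_gt0 t : 0 < 1 + sq_width a t by have := sq_width_ge0_le1 a t; lra.
have prod_le : \prod_(1 <= t < T.+1 | act t == a) (1 + sq_width a t)
    <= (1 + T%:R / (d%:R * lam)) ^+ d.
  by rewrite -(ler_pM2l (exprn_gt0 d lam_gt0)) -det_Vmat -exprMn det_Vmat_le.
apply: le_trans (_ : _ <= \sum_(1 <= t < T.+1 | act t == a) 2 * ln (1 + sq_width a t)) _.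
  by apply: ler_sum => t _; apply/le_2ln1D/sq_width_ge0_le1.
rewrite -mulr_sumr ler_wpM2l // -ln_prod // mulr_natl -lnXn //.
by rewrite ler_ln ?posrE ?prodr_gt0 ?exprn_gt0.
Qed.

Lemma sum_sq_width_le T :
  \sum_(1 <= t < T.+1) sq_width (act t) t
    <= N%:R * (2 * (d%:R * ln (1 + T%:R / (d%:R * lam)))).
Proof.
rewrite -[N in N%:R]card_ord mulr_natl -sumr_const.
rewrite (partition_big act predT) //=; apply: ler_sum => a _.
by rewrite (eq_bigr (sq_width a)) ?sum_sq_width_arm_le // => t /eqP->.
Qed.

Lemma swidthE a t : swidth lam x act a t = Num.sqrt (sq_width a t).
Proof. by []. Qed.

Lemma sum_swidth_le T :
  \sum_(1 <= t < T.+1) swidth lam x act (act t) t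
    <= Num.sqrt (2 * N%:R * d%:R * T%:R * ln (1 + T%:R / (d%:R * lam))).
Proof.
have sum_ge0 : 0 <= \sum_(1 <= t < T.+1) swidth lam x act (act t) t.
  by apply: sumr_ge0 => t _; exact: sqrtr_ge0.
rewrite -(ger0_norm sum_ge0) -sqrtr_sqr; apply: ler_wsqrtr.
apply: le_trans (sqr_sum_le _ 1 T.+1) _; rewrite subn1 /=.
under eq_bigr do rewrite swidthE sqr_sqrtr ?(andP (sq_width_ge0_le1 _ _)).1 //.
set L := ln _; rewrite (_ : 2 * _ * _ * _ * L = T%:R * (N%:R * (2 * (d%:R * L)))).
  by rewrite ler_wpM2l ?sum_sq_width_le.
by ring.
Qed.

End EllipticalPotential.

Section Optimism.
Set Implicit Arguments.
Unset Strict Implicit.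
Variables (R : realType) (d N : nat) (sigma delta lam alpha : R).
Variables (pen : 'I_N -> R) (theta : 'I_N -> 'cV[R]_d) (x : nat -> 'cV[R]_d).
Variables (eta : nat -> 'I_N -> R) (act : nat -> 'I_N).
Hypothesis sigma_gt0 : 0 < sigma.

Local Notation beta := (beta d N sigma delta lam).
Local Notation score := (score sigma delta lam theta x eta act alpha pen).
Local Notation mu := (mu theta x alpha pen).
Local Notation width := (swidth lam x act).

Lemma innerC (u v : 'cV[R]_d) : inner u v = inner v u.
Proof. by rewrite /inner -[u^T *m v]trmx11 trmx_mul trmxK. Qed.

Lemma innerBr (u v w : 'cV[R]_d) : inner u (v - w) = inner u v - inner u w.
Proof. by rewrite /inner mulmxBr [LHS]mxE [X in _ + X]mxE. Qed.

Lemma beta_ge0 t : 0 <= beta t.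
Proof. by rewrite /beta addr_ge0 ?sqrtr_ge0 // mulr_ge0 ?sqrtr_ge0 // ltW. Qed.

Lemma beta_le t T : (0 < d)%N -> 0 < lam -> (t <= T)%N -> beta t <= beta T.
Proof.
move=> d_gt0 lam_gt0 le_tT; have dlam_gt0 : 0 < d%:R * lam by rewrite mulr_gt0 ?ltr0n.
have ln_arg_gt0 (k : nat) : 0 < 1 + k%:R / (d%:R * lam).
  by rewrite ltr_wpDr // divr_ge0 // ltW.
rewrite /beta lerD2r ler_pM2l //; apply: ler_wsqrtr; rewrite lerD2r.
rewrite ler_wpM2l ?ler0n // ler_ln ?posrE // lerD2l ler_pM2r ?invr_gt0 //.
by rewrite ler_nat.
Qed.

Section Round.
Variables (t : nat) (C : {set 'I_N}).
Hypothesis confidence : forall a,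
  `|inner (x t) (thetahat lam theta x eta act a t - theta a)| <= beta t * width a t.

Let estimate_error a :=
  inner (thetahat lam theta x eta act a t) (x t) - inner (theta a) (x t).

Let confidence_bounds a : `|estimate_error a| <= beta t * width a t.
Proof. by rewrite /estimate_error !(innerC _ (x t)) -innerBr confidence. Qed.

Lemma mu_le_score a : mu t C a <= score C t a.
Proof.
move: (confidence_bounds a); rewrite ler_norml /estimate_error /mu /score.
by move=> /andP[]; lra.
Qed.

Lemma score_le_mu a : score C t a <= mu t C a + 2 * beta t * width a t.
Proof.
move: (confidence_bounds a); rewrite ler_norml /estimate_error /mu /score.
by move=> /andP[]; lra.
Qed.

Lemma maxmu_sub_mu_le :
  (forall b, score C t b <= score C t (act t)) ->
  maxmu theta x alpha pen t C (act t) - mu t C (act t) <= 2 * beta t * width (act t) t.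
Proof.
move=> greedy; rewrite lerBlDl; apply: bigmax_le => [|b _].
  by rewrite lerDl mulr_ge0 ?sqrtr_ge0 // mulr_ge0 ?beta_ge0.
exact: le_trans (mu_le_score b) (le_trans (greedy b) (score_le_mu _)).
Qed.

End Round.
End Optimism.

Theorem lemmaC2 (R : realType) (d N K H T : nat)
  (sigma delta lam alpha : R) (pen : 'I_N -> R)
  (theta : 'I_N -> 'cV[R]_d) (x : nat -> 'cV[R]_d) (eta : nat -> 'I_N -> R)
  (C : nat -> {set 'I_N}) (act : nat -> 'I_N) :
  (0 < d)%N -> (0 < N)%N -> (0 < H)%N ->
  0 < sigma -> 0 < delta < 1 -> 1 <= lam -> 0 < alpha ->
  (forall a, 0 < pen a) ->
  (* ||x_t||_2 <= 1 *)
  (forall t, inner (x t) (x t) <= 1) ->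
  (* caches: at most K adapters in every epoch *)
  (forall l, (#|C l| <= K)%N) ->
  (* POLAR plays a maximizer of score_t in every round *)
  (forall t, (1 <= t <= T)%N -> forall b : 'I_N,
     score sigma delta lam theta x eta act alpha pen (C (epoch H t)) t b
     <= score sigma delta lam theta x eta act alpha pen (C (epoch H t)) t (act t)) ->
  (* the event E *)
  (forall (a : 'I_N) t, (1 <= t <= T)%N ->
     `|inner (x t) (thetahat lam theta x eta act a t - theta a)|
       <= beta d N sigma delta lam t * swidth lam x act a t) ->
  \sum_(1 <= t < T.+1)
     (maxmu theta x alpha pen t (C (epoch H t)) (act t)
      - mu theta x alpha pen t (C (epoch H t)) (act t))
  <= 2 * beta d N sigma delta lam T *
     Num.sqrt (2 * N%:R * d%:R * T%:R * ln (1 + T%:R / (d%:R * lam))).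
Proof.
(* Neither the cache constraints nor the signs of [alpha] and [pen] matter:
   the penalty terms of [mu] and [score] are the same. *)
move=> d_gt0 _ _ sigma_gt0 _ lam_ge1 _ _ x_le1 _ greedy confidence.
have lam_gt0 : 0 < lam by apply: lt_le_trans lam_ge1.
have round_le t : (1 <= t < T.+1)%N ->
    maxmu theta x alpha pen t (C (epoch H t)) (act t)
    - mu theta x alpha pen t (C (epoch H t)) (act t)
    <= 2 * beta d N sigma delta lam T * swidth lam x act (act t) t.
  rewrite ltnS => t_range.
  have := maxmu_sub_mu_le sigma_gt0 (fun a => confidence a t t_range) (greedy t t_range).
  move/le_trans; apply; rewrite ler_wpM2r ?sqrtr_ge0 // ler_wpM2l // beta_le //.
  by case/andP: t_range.
apply: le_trans (ler_sum_nat round_le) _.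
rewrite -mulr_sumr ler_wpM2l ?mulr_ge0 ?beta_ge0 //.
exact: sum_swidth_le.
Qed.
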